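(* Assume the setup in the context. For $i\in\{n-2,n-1\}$ with $P(T=i)>0$, we have $P(|S|\le1\mid T=i)\ge\frac12$, where $S:=\sum_{j=1}^n v_j\epsilon_j$.
   Context: Let $n\ge4$ and let $v_1,\dots,v_n$ be real numbers with $\sum_{i=1}^n v_i^2\le1$ ordered so that $v_n\ge v_1\ge v_{n-1}\ge v_2\ge v_3\ge\cdots\ge v_{n-2}\ge0$. Let $\epsilon_1,\dots,\epsilon_n$ be independent Rademacher random variables ($\pm1$ with probability $\tfrac12$ each). For $t\in\{1,\dots,n-1\}$ put $X_t:=\sum_{i=1}^t v_i\epsilon_i$. Define the random time $T:=\min\big(\{t\le n-1: |X_t|>1-v_{t+1}\}\cup\{n-1\}\big)$. *)

(* Rademacher signs are modelled by the uniform probability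
   space of boolean vectors e : {ffun 'I_n -> bool}; e i = true means
   epsilon_{i+1} = +1, false means epsilon_{i+1} = -1. *)
From HB Require Import structures.
From mathcomp Require Import all_boot all_order all_algebra.
Set Implicit Arguments. Unset Strict Implicit. Unset Printing Implicit Defensive.
Import Order.TTheory GRing.Theory Num.Theory.
Local Open Scope ring_scope.

Section Rad.
Variables (R : realFieldType) (n : nat) (v : nat -> R).
(* v is 1-based: v 1, ..., v n are v_1, ..., v_n *)

Definition sgn (b : bool) : R := if b then 1 else -1.

(* X_t = sum_{j=1}^t v_j eps_j  (ordinal i stands for index i+1) *)
Definition Xt (t : nat) (e : {ffun 'I_n -> bool}) : R :=
  \sum_(i < n | (i < t)%N) v i.+1 * sgn (e i).

Definition Ssum (e : {ffun 'I_n -> bool}) : R := Xt n e.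

(* T = min ({t in 1..n-1 : |X_t| > 1 - v_{t+1}} U {n-1}) *)
Definition Tstop (e : {ffun 'I_n -> bool}) : nat :=
  head n.-1 [seq t <- iota 1 n.-1 | 1 - v t.+1 < `|Xt t e| ].

Definition Pr (A : pred {ffun 'I_n -> bool}) : R :=
  #|[set e | A e]|%:R / (2 ^ n)%:R.
End Rad.

From HB Require Import structures.
From mathcomp Require Import all_boot all_order all_algebra.
From mathcomp Require Import zify lra.
Set Implicit Arguments. Unset Strict Implicit. Unset Printing Implicit Defensive.
Import Order.TTheory GRing.Theory Num.Theory.
Local Open Scope ring_scope.

(* If T >= n-2 then |X_{n-3}| <= 1 - v_{n-2}, hence |X_{n-1}| <= 1 + v_{n-1} <= 1 + v_n.
   Since T does not depend on the last sign, flipping epsilon_n is a bijection of the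
   event {T = i}; and for |y| <= 1 + b with 0 <= b <= 1 at least one of y + b, y - b
   lies in [-1, 1]. So at least half of {T = i} lies in {|S| <= 1}. *)

Lemma head_filter_iota_le (p : pred nat) m k t d :
  (m <= t)%N -> (t < m + k)%N -> p t -> (head d [seq x <- iota m k | p x] <= t)%N.
Proof.
elim: k m => [|k IHk] m le_mt lt_tmk pt; first by lia.
rewrite /=; case: ifP => pm //=.
have lt_mt : (m < t)%N by case: (eqVneq m t) => [Emt|]; [rewrite Emt pt in pm | lia].
by apply: IHk pt; lia.
Qed.

Lemma nonincr_range_le d (T : porderType d) (f : nat -> T) a b :
  (a <= b)%N -> (forall k, (a <= k < b)%N -> (f k.+1 <= f k)%O) -> (f b <= f a)%O.
Proof.
elim: b => [|b IHb]; first by rewrite leqn0 => /eqP ->.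
rewrite leq_eqVlt => /predU1P[<- // | lt_ab] f_dec.
apply: le_trans (f_dec b _) (IHb _ _) => [|| k le_akb]; try lia.
by apply: f_dec; lia.
Qed.

Lemma sgn_norm (R : realFieldType) (b : bool) : `|sgn R b| = 1.
Proof. by case: b; rewrite /sgn ?normrN normr1. Qed.

Lemma norm_addr_sgn_le1 (R : realFieldType) (y b : R) c :
  `|y| <= 1 + b -> 0 <= b <= 1 ->
  (`|y + b * sgn R c| <= 1) || (`|y + b * sgn R (~~ c)| <= 1).
Proof.
rewrite ler_norml => /andP[ge_y le_y] /andP[b_ge0 b_le1].
case: c; rewrite /sgn /= !ler_norml; case: (lerP 0 y) => y_sign.
- by apply/orP; right; apply/andP; split; lra.
- by apply/orP; left; apply/andP; split; lra.
- by apply/orP; left; apply/andP; split; lra.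
- by apply/orP; right; apply/andP; split; lra.
Qed.

Lemma Pr_cond_ge_half (R : realFieldType) n (A B : pred {ffun 'I_n -> bool}) f :
  injective f -> (forall e, B e -> (A e && B e) || (A (f e) && B (f e))) ->
  0 < Pr R B -> 1 / 2 <= Pr R (fun e => A e && B e) / Pr R B.
Proof.
move=> inj_f cover PrB_gt0.
set sA := [set e | A e && B e]; set sB := [set e | B e].
have card_sB : (#|sB| <= 2 * #|sA|)%N.
  have sB_sub : sB \subset sA :|: f @^-1: sA.
    by apply/subsetP => e; rewrite !inE => /cover.
  apply: leq_trans (subset_leq_card sB_sub) _.
  by apply: leq_trans (leq_card_setU _ _) _; rewrite card_preimset //; lia.
have pow_gt0 : 0 < (2 ^ n)%:R :> R by rewrite ltr0n expn_gt0.
have sB_gt0 : 0 < #|sB|%:R :> R.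
  by move: PrB_gt0; rewrite /Pr pmulr_lgt0 // invr_gt0.
rewrite /Pr -/sA -/sB invf_div mulrA divfK ?gt_eqF // ler_pdivlMr //.
have : #|sB|%:R <= (2 * #|sA|)%:R :> R by rewrite ler_nat.
by rewrite natrM; lra.
Qed.

Section RandomWalk.
Variables (R : realFieldType) (n : nat) (v : nat -> R).

Lemma Xt_recr t (lt_tn : (t < n)%N) e :
  Xt v t.+1 e = Xt v t e + v t.+1 * sgn R (e (Ordinal lt_tn)).
Proof.
rewrite /Xt (bigD1 (Ordinal lt_tn)) //= addrC; congr (_ + _).
by apply: eq_bigl => i; rewrite ltnS -val_eqE /= andbC -ltn_neqAle.
Qed.

Lemma norm_Xt_recr_le t (lt_tn : (t < n)%N) (e : {ffun 'I_n -> bool}) :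
  `|Xt v t.+1 e| <= `|Xt v t e| + `|v t.+1|.
Proof.
by rewrite (Xt_recr lt_tn) (le_trans (ler_normD _ _)) // normrM sgn_norm mulr1.
Qed.

Lemma Xt_lt_Tstop t (e : {ffun 'I_n -> bool}) :
  (0 < t < n)%N -> (t < Tstop v e)%N -> `|Xt v t e| <= 1 - v t.+1.
Proof.
move=> /andP[t_gt0 lt_tn] lt_tT; rewrite leNgt; apply/negP => stop_t.
have := @head_filter_iota_le (fun s => 1 - v s.+1 < `|Xt v s e|) 1 n.-1 t n.-1
  t_gt0 ltac:(lia) stop_t.
by rewrite -/(Tstop v e) leqNgt lt_tT.
Qed.

End RandomWalk.

Section FlipLast.
Variables (R : realFieldType) (n : nat) (v : nat -> R).

Definition flip_last (e : {ffun 'I_n.+1 -> bool}) : {ffun 'I_n.+1 -> bool} :=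
  [ffun j => (j == ord_max) (+) e j].

Lemma flip_lastK : involutive flip_last.
Proof. by move=> e; apply/ffunP => j; rewrite !ffunE addKb. Qed.

Lemma flip_last_inj : injective flip_last.
Proof. exact: can_inj flip_lastK. Qed.

Lemma Xt_flip_last t e : (t <= n)%N -> Xt v t (flip_last e) = Xt v t e.
Proof.
move=> le_tn; apply: eq_bigr => j lt_jt; rewrite ffunE.
suff /negbTE -> : j != ord_max by [].
by rewrite -val_eqE /=; lia.
Qed.

Lemma Tstop_flip_last e : Tstop v (flip_last e) = Tstop v e.
Proof.
congr head; apply: eq_in_filter => t; rewrite mem_iota => /andP[_ lt_t].
by rewrite Xt_flip_last //; lia.
Qed.

Lemma Ssum_recr (e : {ffun 'I_n.+1 -> bool}) :
  Ssum v e = Xt v n e + v n.+1 * sgn R (e ord_max).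
Proof. exact: Xt_recr. Qed.

Lemma Ssum_flip_last (e : {ffun 'I_n.+1 -> bool}) :
  Ssum v (flip_last e) = Xt v n e + v n.+1 * sgn R (~~ e ord_max).
Proof. by rewrite Ssum_recr Xt_flip_last // ffunE eqxx. Qed.

End FlipLast.

Theorem mainTheorem8 (R : realFieldType) (n : nat) (v : nat -> R) :
  (4 <= n)%N ->
  \sum_(1 <= j < n.+1) v j ^+ 2 <= 1 ->
  v n >= v 1%N -> v 1%N >= v n.-1 -> v n.-1 >= v 2%N ->
  (forall k : nat, (2 <= k)%N -> (k < n.-2)%N -> v k >= v k.+1) ->
  v n.-2 >= 0 ->
  forall i : nat, (i == n.-2) || (i == n.-1) ->
  0 < @Pr R n (fun e => Tstop v e == i) ->
  @Pr R n (fun e => (`|Ssum v e| <= 1) && (Tstop v e == i))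
    / @Pr R n (fun e => Tstop v e == i) >= 1 / 2.
Proof.
case: n => [|[|[|[|m]]]] // _ /=.
move=> sum_sq v1_le_vn vn1_le_v1 v2_le_vn1 v_noninc vn2_ge0 i i_tail.
have vn2_le_v2 : v m.+2 <= v 2%N.
  by apply: nonincr_range_le => // k /andP[? ?]; apply: v_noninc.
have vn1_ge0 : 0 <= v m.+3 by lra.
have vn_ge0 : 0 <= v m.+4 by lra.
have vn_le1 : v m.+4 <= 1.
  rewrite -(@expr_le1 _ 2) //; apply: le_trans sum_sq.
  rewrite big_nat_recr //= lerDr; apply: sumr_ge0 => j _; exact: sqr_ge0.
have Xn1_le (e : {ffun 'I_m.+4 -> bool}) :
    Tstop v e = i -> `|Xt v m.+3 e| <= 1 + v m.+4.
  move=> Te.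
  have Xn3_le : `|Xt v m.+1 e| <= 1 - v m.+2.
    by apply: Xt_lt_Tstop; [lia | move: i_tail; rewrite Te; lia].
  have := norm_Xt_recr_le v (ltnW (ltnSn m.+3)) e.
  have := norm_Xt_recr_le v (ltnW (ltnW (ltnSn m.+3))) e.
  by rewrite (ger0_norm vn2_ge0) (ger0_norm vn1_ge0); lra.
apply: (@Pr_cond_ge_half _ _ (fun e => `|Ssum v e| <= 1) (fun e => Tstop v e == i)
  _ (@flip_last_inj m.+3)) => e /eqP Te.
rewrite Ssum_recr Ssum_flip_last Tstop_flip_last Te eqxx !andbT.
have := norm_addr_sgn_le1 (e ord_max) (Xn1_le e Te); rewrite vn_ge0 vn_le1; exact.
Qed.
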